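(* Let $n\ge1$, $T\ge1$, $\beta\in(0,1)$, and let $\mathcal{Q}$ be the set of all matrices $D(A)$ with $A\in\mathcal{F}$, and $E=D(B)$. Then: (i) for every $D\in\mathcal{Q}$ and every $\mathbf{z}\in\mathbb{R}^{Tn}$, $\|D\mathbf{z}\|_T\le\|\mathbf{z}\|_T$; (ii) the subspace $W_T:=\{\mathbf{z}=(\mathbf{z}_1^\top,\dots,\mathbf{z}_T^\top)^\top\in\mathbb{R}^{Tn}:\ \mathbf{e}^\top\mathbf{z}_t=0 \text{ for } t=1,\dots,T\}$ satisfies $DW_T\subseteq W_T$ for all $D\in\mathcal{Q}$; (iii) for every non-zero $\mathbf{z}\in W_T$, $\|E\mathbf{z}\|_T<\|\mathbf{z}\|_T$.
   Context: $\mathbf{e}\in\mathbb{R}^n$ is the all-ones vector. For $b\in\{\beta,1\}^n$ the AIMD matrix is $A_b=\operatorname{diag}(b)+\frac1n\mathbf{e}(\mathbf{e}-b)^\top\in\mathbb{R}^{n\times n}$; $\mathcal{F}=\{A_b: b\in\{\beta,1\}^n\}$, and $B:=A_{\beta\mathbf{e}}=\beta I+\frac{1-\beta}{n}\mathbf{e}\mathbf{e}^\top$. For $A\in\mathcal{F}$, $D(A)\in\mathbb{R}^{Tn\times Tn}$ is the $T\times T$ block matrix with $n\times n$ blocks defined by: block row 1 is $(A,0,\dots,0)$; block row 2 (if $T\ge2$) is $(\tfrac12(A+I),0,\dots,0)$; for $3\le \ell\le T$, block row $\ell$ has $\tfrac1\ell A$ in block column 1, $\tfrac{\ell-1}{\ell}I$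 in block column $\ell-1$, and zero blocks elsewhere. For $\mathbf{z}=(\mathbf{z}_1^\top,\dots,\mathbf{z}_T^\top)^\top$ with $\mathbf{z}_\ell\in\mathbb{R}^n$, $\|\mathbf{z}\|_T:=\max_{\ell=1,\dots,T}\|\mathbf{z}_\ell\|_1$, where $\|\cdot\|_1$ is the usual $\ell^1$ norm on $\mathbb{R}^n$. *)

From HB Require Import structures.
From mathcomp Require Import all_boot all_order all_algebra.
Set Implicit Arguments. Unset Strict Implicit. Unset Printing Implicit Defensive.
Import Order.TTheory GRing.Theory Num.Theory.
Local Open Scope ring_scope.

Definition ones (R : realFieldType) (n : nat) : 'cV[R]_n := const_mx 1.

Definition AIMD (R : realFieldType) (n : nat) (b : 'cV[R]_n) : 'M[R]_n :=
  diag_mx b^T + n%:R^-1 *: (ones R n *m (ones R n - b)^T).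

Definition in_beta1 (R : realFieldType) (n : nat) (beta : R) (b : 'cV[R]_n) : Prop :=
  forall i, b i 0 = beta \/ b i 0 = 1.

Definition AIMD_family (R : realFieldType) (n : nat) (beta : R) (A : 'M[R]_n) : Prop :=
  exists b : 'cV[R]_n, in_beta1 beta b /\ A = AIMD b.

Definition Bmat (R : realFieldType) (n : nat) (beta : R) : 'M[R]_n :=
  AIMD (beta *: ones R n).

(* R^{Tn} seen as T stacked blocks of size n *)
Definition blk (T n : nat) : 'I_T -> nat := fun _ => n.
Arguments blk : clear implicits.

(* block (l, k) of D(A), with 0-based indices: block row l+1, block column k+1 *)
Definition Dblock (R : realFieldType) (n : nat) (A : 'M[R]_n) (T : nat)
    (l k : 'I_T) : 'M[R]_n :=
  if (l == 0 :> nat) then (if (k == 0 :> nat) then A else 0)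
  else if (l == 1 :> nat) then (if (k == 0 :> nat) then 2%:R^-1 *: (A + 1%:M) else 0)
  else (if (k == 0 :> nat) then (l.+1)%:R^-1 *: A else 0)
     + (if (k.+1 == l :> nat) then ((l%:R) / (l.+1)%:R) *: 1%:M else 0).

Definition Dmat (R : realFieldType) (T n : nat) (A : 'M[R]_n)
  : 'M[R]_(\sum_(i < T) blk T n i)%N :=
  @mxblock R T T (blk T n) (blk T n) (fun l k => Dblock A l k).

Definition zblock (R : realFieldType) (T n : nat)
    (z : 'cV[R]_(\sum_(i < T) blk T n i)%N) (t : 'I_T) : 'cV[R]_n :=
  @submxcol R T (blk T n) 1 z t.

Definition norm1 (R : realFieldType) (n : nat) (x : 'cV[R]_n) : R :=
  \sum_(i < n) `|x i 0|.

(* ||z||_T = max_t ||z_t||_1 (norms are >= 0, so 0 is a neutral start) *)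
Definition normT (R : realFieldType) (T n : nat)
    (z : 'cV[R]_(\sum_(i < T) blk T n i)%N) : R :=
  \big[Num.max/0]_(t < T) norm1 (zblock z t).

Definition in_WT (R : realFieldType) (T n : nat)
    (z : 'cV[R]_(\sum_(i < T) blk T n i)%N) : Prop :=
  forall t : 'I_T, (ones R n)^T *m zblock z t = 0.

(* Block row l of D(A) z (rows counted from 0) is an average of A z_1 with
   z_1 or z_(l-1), with weights 1/(l+1) and l/(l+1).  A column-stochastic A is
   a contraction for the l1 norm and satisfies e^T A = e^T, which gives (i) and
   (ii).  On the sum-zero subspace B acts as beta I, so block row l of E z has
   l1 norm at most (beta + l)/(l + 1) ||z||_T, which is < ||z||_T if z <> 0. *)
From HB Require Import structures.
From mathcomp Require Import all_boot all_order all_algebra.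
From mathcomp Require Import ring.
Import Order.TTheory GRing.Theory Num.Theory.
Local Open Scope ring_scope.

Section BlockRows.
Context {R : realFieldType}.

Lemma zblock_Dmat_mul (T n : nat) (A : 'M[R]_n) z l :
  zblock (Dmat T A *m z) l = \sum_k Dblock A l k *m zblock z k.
Proof. by rewrite /zblock /Dmat -{1}(submxcolK z) mul_mxblock_mxrow mxcolK. Qed.

Lemma nat_of_ord_eq0F {T : nat} {k : 'I_T.+1} : k != ord0 -> (k == 0 :> nat) = false.
Proof. by move=> k0; apply/negbTE; apply: contra k0 => /eqP k0; apply/eqP/val_inj. Qed.

Lemma sum_Dblock_mul (T n : nat) (A : 'M[R]_n) (Z : 'I_T.+1 -> 'cV[R]_n) l :
  \sum_k Dblock A l k *m Z k =
  if (l == 0 :> nat) then A *m Z ord0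
  else if (l == 1 :> nat) then 2%:R^-1 *: (A *m Z ord0 + Z ord0)
  else (l.+1)%:R^-1 *: (A *m Z ord0) + (l%:R / (l.+1)%:R) *: Z (inord l.-1).
Proof.
rewrite (bigD1 ord0) //= {1}/Dblock /=.
have off0 k : k != ord0 -> Dblock A l k =
    if [|| l == 0 :> nat, l == 1 :> nat | k.+1 != l] then 0 else (l%:R / (l.+1)%:R) *: 1%:M.
  move=> k0; rewrite /Dblock (nat_of_ord_eq0F k0) add0r.
  by case: (l == 0 :> nat) => //; case: (l == 1 :> nat) => //; case: eqP.
case: ifP => [l0|l0].
  by rewrite big1 ?addr0 // => k /off0 ->; rewrite l0 mul0mx.
case: ifP => [l1|l1].
  rewrite big1 ?addr0; first by rewrite -scalemxAl mulmxDl mul1mx.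
  by move=> k /off0 ->; rewrite l1 orbT mul0mx.
have l2 : (2 <= l)%N by case: (nat_of_ord l) l0 l1 => [|[|]].
have lt_pred : (l.-1 < T.+1)%N by apply: leq_ltn_trans (ltn_ord l); apply: leq_pred.
have pred_neq0 : inord l.-1 != ord0 :> 'I_T.+1.
  by apply/eqP => /(congr1 val) /=; rewrite inordK //; case: (nat_of_ord l) l2 => [|[|]].
rewrite (bigD1 (inord l.-1)) //= big1 ?addr0; last first.
  move=> k /andP [k0 kl]; rewrite off0 // l0 l1 /=; case: eqP => [kl'|_]; last by rewrite mul0mx.
  by case/eqP: kl; apply: val_inj; rewrite /= -kl' /= inordK // ltnW.
rewrite /Dblock l0 l1 /= inordK // prednK ?(leq_trans _ l2) // eqxx.
have -> : (l.-1 == 0)%N = false by case: (nat_of_ord l) l2 => [|[|]].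
by rewrite [1%N == _]eq_sym l1 addr0 add0r -!scalemxAl mul1mx.
Qed.

End BlockRows.

Section Norms.
Context {R : realFieldType}.
Lemma norm1_ge0 {n : nat} (x : 'cV[R]_n) : 0 <= norm1 x.
Proof. exact: sumr_ge0. Qed.

Lemma norm1D {n : nat} (x y : 'cV[R]_n) : norm1 (x + y) <= norm1 x + norm1 y.
Proof. by rewrite /norm1 -big_split; apply: ler_sum => i _; rewrite mxE ler_normD. Qed.

Lemma norm1Z {n : nat} (c : R) (x : 'cV[R]_n) : norm1 (c *: x) = `|c| * norm1 x.
Proof. by rewrite /norm1 mulr_sumr; apply: eq_bigr => i _; rewrite mxE normrM. Qed.

Lemma norm1_eq0 {n : nat} (x : 'cV[R]_n) : norm1 x = 0 -> x = 0.
Proof.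
move=> x0; apply/matrixP => i j; rewrite (ord1 j) mxE.
by apply/eqP; rewrite -normr_eq0 (psumr_eq0P (fun i _ => normr_ge0 (x i 0)) x0).
Qed.

Lemma normT_ge0 {T n : nat} (z : 'cV[R]_(\sum_(i < T) blk T n i)%N) : 0 <= normT z.
Proof. by rewrite /normT; elim/big_ind: _ => // [x y x0 _|t _]; rewrite ?le_max ?x0 ?norm1_ge0. Qed.

Lemma norm1_zblock_le {T n : nat} (z : 'cV[R]_(\sum_(i < T) blk T n i)%N) t :
  norm1 (zblock z t) <= normT z.
Proof. by rewrite /normT (bigD1 t) //= le_max lexx. Qed.

Lemma normT_le {T n : nat} (z : 'cV[R]_(\sum_(i < T) blk T n i)%N) {M : R} :
  0 <= M -> (forall t, norm1 (zblock z t) <= M) -> normT z <= M.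
Proof. by move=> M0 zM; rewrite /normT; elim/big_ind: _ => // x y; rewrite ge_max => -> ->. Qed.

Lemma normT_lt {T n : nat} (z : 'cV[R]_(\sum_(i < T) blk T n i)%N) {M : R} :
  0 < M -> (forall t, norm1 (zblock z t) < M) -> normT z < M.
Proof. by move=> M0 zM; rewrite /normT; elim/big_ind: _ => // x y; rewrite gt_max => -> ->. Qed.

Lemma normT_gt0 {T n : nat} {z : 'cV[R]_(\sum_(i < T) blk T n i)%N} : z != 0 -> 0 < normT z.
Proof.
move=> z0; rewrite lt_def normT_ge0 andbT; apply: contra z0 => /eqP zT0.
have zblock0 t : zblock z t = 0.
  apply: norm1_eq0; apply/eqP; rewrite eq_le norm1_ge0 andbT.
  by rewrite -zT0 norm1_zblock_le.
by rewrite -(submxcolK z) -(mxcol0 (V:=R) (p_:=blk T n) 1); apply/eqP/eq_mxcol.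
Qed.

End Norms.

Section ColumnStochastic.
Context {R : realFieldType}.

Definition col_stochastic {n : nat} (A : 'M[R]_n) :=
  (forall i j, 0 <= A i j) /\ (forall j, \sum_i A i j = 1).

Lemma norm1_col_stochastic_mul {n : nat} {A : 'M[R]_n} (x : 'cV[R]_n) :
  col_stochastic A -> norm1 (A *m x) <= norm1 x.
Proof.
move=> [A_ge0 A_sum]; rewrite /norm1.
apply: le_trans (_ : \sum_i \sum_j A i j * `|x j 0| <= _).
  apply: ler_sum => i _; rewrite mxE; apply: le_trans (ler_norm_sum _ _ _) _.
  by apply: ler_sum => j _; rewrite normrM ger0_norm.
by rewrite exchange_big; apply: ler_sum => j _; rewrite -mulr_suml A_sum mul1r.
Qed.

Lemma ones_col_stochastic_mul {n : nat} {A : 'M[R]_n} :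
  col_stochastic A -> (ones R n)^T *m A = (ones R n)^T.
Proof.
move=> [_ A_sum]; apply/matrixP => i j; rewrite !mxE -(A_sum j).
by apply: eq_bigr => k _; rewrite !mxE mul1r.
Qed.

Lemma AIMD_entry {n : nat} (b : 'cV[R]_n) i j :
  AIMD b i j = b i 0 *+ (i == j) + n%:R^-1 * (1 - b j 0).
Proof. by rewrite /AIMD !mxE big_ord1 !mxE mul1r. Qed.

Lemma AIMD_col_stochastic {n : nat} {beta : R} {b : 'cV[R]_n} :
  (0 < n)%N -> 0 <= beta <= 1 -> in_beta1 beta b -> col_stochastic (AIMD b).
Proof.
move=> n0 /andP [beta0 beta1] b01; split=> [i j|j].
  rewrite AIMD_entry addr_ge0 ?mulr_ge0 ?invr_ge0 ?ler0n //.
    by case: (b01 i) => ->; rewrite mulrn_wge0.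
  by case: (b01 j) => ->; rewrite subr_ge0.
under eq_bigr do rewrite AIMD_entry.
rewrite big_split /= sumr_const card_ord -[X in _ + X]mulr_natr mulrAC mulVf; last first.
  by rewrite pnatr_eq0 -lt0n.
rewrite mul1r (bigD1 j) //= eqxx mulr1n big1 ?addr0 ?(addrC _ (1 - _)) ?subrK //.
by move=> i /negbTE ->.
Qed.

Lemma AIMD_const_mul_sum0 {n : nat} (c : R) (x : 'cV[R]_n) :
  (ones R n)^T *m x = 0 -> AIMD (c *: ones R n) *m x = c *: x.
Proof.
move=> /matrixP /(_ 0 0); rewrite !mxE.
under eq_bigr do rewrite !mxE mul1r; move=> x_sum0.
apply/matrixP => i j; rewrite (ord1 j) !mxE.
under eq_bigr do rewrite AIMD_entry !mxE mulrDl.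
rewrite big_split /= -mulr_sumr x_sum0 mulr0 addr0.
rewrite (bigD1 i) //= eqxx mulr1n mulr1 big1 ?addr0 // => k.
by rewrite eq_sym => /negbTE ->; rewrite mulr0n mul0r.
Qed.

End ColumnStochastic.

Section Rows.
Context {R : realFieldType}.

Lemma norm1_sum_Dblock_mul_le {T n : nat} {A : 'M[R]_n} {Z : 'I_T.+1 -> 'cV[R]_n}
    {g M : R} (l : 'I_T.+1) :
  0 <= g -> norm1 (A *m Z ord0) <= g * M -> (forall t, norm1 (Z t) <= M) ->
  norm1 (\sum_k Dblock A l k *m Z k) <= (g + l%:R) / (l.+1)%:R * M.
Proof.
move=> g0 AZ_le Z_le; have inv_ge0 m : 0 <= m%:R^-1 :> R by rewrite invr_ge0 ler0n.
rewrite sum_Dblock_mul; case: ifP => [/eqP -> | l0]; first by rewrite addr0 divr1.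
case: ifP => [/eqP l1 | l1].
  rewrite l1 norm1Z ger0_norm //.
  have -> : (g + 1%:R) / 2%:R * M = 2%:R^-1 * (g * M + M) by ring.
  by rewrite ler_wpM2l // (le_trans (norm1D _ _)) // lerD.
apply: le_trans (norm1D _ _) _; rewrite !norm1Z !ger0_norm ?divr_ge0 ?ler0n //.
have -> : (g + l%:R) / (l.+1)%:R * M = (l.+1)%:R^-1 * (g * M) + l%:R / (l.+1)%:R * M.
  by ring.
by rewrite lerD // ler_wpM2l ?divr_ge0 ?ler0n.
Qed.

Lemma sum_Dblock_mul_sum0 {T n : nat} {A : 'M[R]_n} {Z : 'I_T.+1 -> 'cV[R]_n} l :
  (ones R n)^T *m A = (ones R n)^T -> (forall t, (ones R n)^T *m Z t = 0) ->
  (ones R n)^T *m (\sum_k Dblock A l k *m Z k) = 0.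
Proof.
move=> eA eZ; have eAZ : (ones R n)^T *m (A *m Z ord0) = 0 by rewrite mulmxA eA eZ.
rewrite sum_Dblock_mul; case: ifP => _ //; case: ifP => _.
  by rewrite -scalemxAr mulmxDr eAZ eZ addr0 scaler0.
by rewrite mulmxDr -!scalemxAr eAZ eZ !scaler0 addr0.
Qed.

End Rows.

Theorem lemma1 (R : realFieldType) (n T : nat) (beta : R) :
  (1 <= n)%N -> (1 <= T)%N -> 0 < beta -> beta < 1 ->
  (forall (A : 'M[R]_n) (z : 'cV[R]_(\sum_(i < T) blk T n i)%N),
      AIMD_family beta A -> normT (Dmat T A *m z) <= normT z) /\
  (forall (A : 'M[R]_n) (z : 'cV[R]_(\sum_(i < T) blk T n i)%N),
      AIMD_family beta A -> in_WT z -> in_WT (Dmat T A *m z)) /\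
  (forall z : 'cV[R]_(\sum_(i < T) blk T n i)%N,
      in_WT z -> z != 0 -> normT (Dmat T (Bmat n beta) *m z) < normT z).
Proof.
move=> n0; case: T => // T _ beta0 beta1.
have stochF (A : 'M[R]_n) : AIMD_family beta A -> col_stochastic A.
  by move=> [b [b01 ->]]; apply: (AIMD_col_stochastic n0 _ b01); rewrite !ltW.
split; [|split].
- move=> A z /stochF stochA; apply: (normT_le _ (normT_ge0 z)) => l.
  rewrite zblock_Dmat_mul.
  apply: le_trans (norm1_sum_Dblock_mul_le l ler01 _ (norm1_zblock_le z)) _.
    by rewrite mul1r (le_trans (norm1_col_stochastic_mul _ stochA)) ?norm1_zblock_le.
  by rewrite nat1r divff ?mul1r // pnatr_eq0.
- move=> A z /stochF /ones_col_stochastic_mul eA zW l.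
  by rewrite zblock_Dmat_mul sum_Dblock_mul_sum0.
- move=> z zW z0; apply: (normT_lt _ (normT_gt0 z0)) => l.
  have Ez0 : norm1 (Bmat n beta *m zblock z ord0) <= beta * normT z.
    by rewrite AIMD_const_mul_sum0 ?zW // norm1Z gtr0_norm // ler_wpM2l ?norm1_zblock_le // ltW.
  rewrite zblock_Dmat_mul.
  apply: le_lt_trans (norm1_sum_Dblock_mul_le l (ltW beta0) Ez0 (norm1_zblock_le z)) _.
  by rewrite mulrAC ltr_pdivrMr ?ltr0n // mulrC ltr_pM2l ?normT_gt0 // -natr1 addrC ltrD2l.
Qed.
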